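(* The centre of $\Omega^1_{\mathcal{D}}(\mathcal{B})$ is $\{0\}$.
   Context: $\mathcal{B}=\mathcal{O}(S^2_q)\subset\mathcal{A}=\mathcal{O}(SU_q(2))$ is the Podle\'{s} sphere, $q\in(0,1]$, and $\Omega^1_{\mathcal{D}}(\mathcal{B})=\mathrm{span}\{a[\mathcal{D},b]\}$ are the one-forms of the Dabrowski--Sitarz spectral triple, identified with off-diagonal $2\times2$ matrices with entries in $\mathcal{A}$, so $\Omega^1_{\mathcal{D}}(\mathcal{B})\subset\mathcal{A}^{\oplus2}$. The centre of a $\mathcal{B}$-bimodule $M$ is $\{x\in M: bx=xb\ \forall b\in\mathcal{B}\}$. It is used that the commutant of $\mathcal{B}$ in $\mathcal{A}$ consists only of scalar multiples of the identity, while $\Omega^1_{\mathcal{D}}(\mathcal{B})$ does not intersect the scalars. *)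

From HB Require Import structures.
From mathcomp Require Import all_boot all_order all_algebra.
From mathcomp Require Import complex.
From mathcomp Require Import reals.
Set Implicit Arguments. Unset Strict Implicit. Unset Printing Implicit Defensive.
Import Order.TTheory GRing.Theory Num.Theory.
Local Open Scope ring_scope.

Section SUq2.
Variable R : realType.
Local Notation C := R[i].
Variable A : algType C.
Variable q : R.

Definition qC : C := real_complex R q.
Definition sqC : C := real_complex R (Num.sqrt q).

(* Defining relations of O(SU_q(2)) with generators a b c d
   (matrix of generators [[a, b], [c, d]]), Klimyk--Schmuedgen 4.1.2. *)
Record SUq2_relations (a b c d : A) : Prop := {
  rel_ab : a * b = qC *: (b * a);
  rel_ac : a * c = qC *: (c * a);
  rel_bd : b * d = qC *: (d * b);
  rel_cd : c * d = qC *: (d * c);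
  rel_bc : b * c = c * b;
  rel_ad : a * d - d * a = (qC - qC^-1) *: (b * c);
  rel_det : a * d - qC *: (b * c) = 1 }.

Definition pbw_mono (a b c d : A) (i : int * nat * nat) : A :=
  let: (k, m, n) := i in
  (match k with Posz k' => a ^+ k' | Negz k' => d ^+ k'.+1 end) * b ^+ m * c ^+ n.

Definition pbw_free (a b c d : A) : Prop :=
  forall (s : seq (int * nat * nat)) (coef : int * nat * nat -> C),
    uniq s -> \sum_(i <- s) coef i *: pbw_mono a b c d i = 0 ->
    forall i, i \in s -> coef i = 0.

Definition pbw_span (a b c d : A) : Prop :=
  forall x : A, exists (s : seq (int * nat * nat)) (coef : int * nat * nat -> C),
    x = \sum_(i <- s) coef i *: pbw_mono a b c d i.

Definition is_OSUq2 (a b c d : A) : Prop :=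
  [/\ SUq2_relations a b c d, pbw_free a b c d & pbw_span a b c d].

Record Uq_action (a b c d : A) (K Ki E F : {linear A -> A}) : Prop := {
  K_mul : forall x y, K (x * y) = K x * K y;
  K_one : K 1 = 1;
  Ki_mul : forall x y, Ki (x * y) = Ki x * Ki y;
  Ki_one : Ki 1 = 1;
  E_mul : forall x y, E (x * y) = E x * Ki y + K x * E y;
  F_mul : forall x y, F (x * y) = F x * Ki y + K x * F y;
  K_a : K a = sqC *: a;  K_b : K b = sqC^-1 *: b;
  K_c : K c = sqC *: c;  K_d : K d = sqC^-1 *: d;
  Ki_a : Ki a = sqC^-1 *: a;  Ki_b : Ki b = sqC *: b;
  Ki_c : Ki c = sqC^-1 *: c;  Ki_d : Ki d = sqC *: d;
  E_a : E a = b;  E_b : E b = 0;  E_c : E c = d;  E_d : E d = 0;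
  F_a : F a = 0;  F_b : F b = a;  F_c : F c = 0;  F_d : F d = c }.

Definition podles (K : {linear A -> A}) (x : A) : Prop := K x = x.

(* One-forms Omega^1_D(B) = span { x [D, y] : x, y in B }, an element being
   identified with the off-diagonal matrix [[0, w1], [w2, 0]], i.e. the pair
   (w1, w2) in A^2.  Here [D, y] = [[0, lam * E y], [mu * F y, 0]] where the
   nonzero constants lam, mu encode the normalisation of D. *)
Definition Omega1 (K E F : {linear A -> A}) (lam mu : C) (w : A * A) : Prop :=
  exists s : seq (A * A),
    (forall p, p \in s -> podles K p.1 /\ podles K p.2) /\
    w.1 = \sum_(p <- s) p.1 * (lam *: E p.2) /\
    w.2 = \sum_(p <- s) p.1 * (mu *: F p.2).

Definition central_B (K : {linear A -> A}) (w : A * A) : Prop :=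
  forall y, podles K y -> y * w.1 = w.1 * y /\ y * w.2 = w.2 * y.

End SUq2.

From HB Require Import structures.
From mathcomp Require Import all_boot all_order all_algebra.
From mathcomp Require Import complex.
From mathcomp Require Import reals.
Set Implicit Arguments. Unset Strict Implicit. Unset Printing Implicit Defensive.
Import Order.TTheory GRing.Theory Num.Theory.
Local Open Scope ring_scope.

(* Since K E = q^-1 E K, K F = q F K and B is the fixed algebra of K, the two
   components of a one-form are eigenvectors of K for the eigenvalues q^-1 and
   q.  A central one-form commutes with bc and ab, which lie in B; in the PBW
   basis, commuting with bc kills every monomial of nonzero a/d-degree and then
   commuting with ab kills every nonconstant monomial, so each component is a
   scalar, i.e. an eigenvector for the eigenvalue 1.  As q <> 1, both vanish. *)

Section QCommutation.
Variables (S : comPzRingType) (A : algType S).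

Lemma qcomm_exprl (x y : A) (u : S) n :
  y * x = u *: (x * y) -> y ^+ n * x = u ^+ n *: (x * y ^+ n).
Proof.
move=> yx; elim: n => [|n IH]; first by rewrite !expr0 mul1r mulr1 scale1r.
by rewrite {1}exprS -mulrA IH -scalerAr mulrA yx -scalerAl scalerA -exprSr
  -mulrA -exprS.
Qed.

Lemma qcomm_exprr (x y : A) (u : S) n :
  y * x = u *: (x * y) -> y * x ^+ n = u ^+ n *: (x ^+ n * y).
Proof.
move=> yx; elim: n => [|n IH]; first by rewrite !expr0 mul1r mulr1 scale1r.
by rewrite {1}exprSr mulrA IH -scalerAl -mulrA yx -scalerAr scalerA -exprSr
  mulrA -exprSr.
Qed.

End QCommutation.

Lemma sumr_undup_count (V : nmodType) (I : eqType) (r : seq I) (F : I -> V) :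
  \sum_(i <- undup r) F i *+ count_mem i r = \sum_(i <- r) F i.
Proof. exact: big_undup_iterop_count. Qed.

Section Deformation.
Variables (R : realType) (q : R).
Hypotheses (q_gt0 : 0 < q) (q_lt1 : q < 1).

Lemma qC_gt0 : 0 < qC q.
Proof. by rewrite /qC -(rmorph0 (real_complex R)) ltcR. Qed.

Lemma qC_neq0 : qC q != 0.
Proof. by rewrite gt_eqF // qC_gt0. Qed.

Lemma qC_lt1 : qC q < 1.
Proof. by rewrite /qC -(rmorph1 (real_complex R)) ltcR. Qed.

Lemma qC_inv_gt1 : 1 < (qC q)^-1.
Proof. by rewrite invf_gt1 ?qC_gt0 ?qC_lt1. Qed.

Lemma sqC_sqr : sqC q * sqC q = qC q.
Proof. by rewrite /sqC /qC -rmorphM -expr2 sqr_sqrtr // ltW. Qed.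

Lemma sqC_neq0 : sqC q != 0.
Proof. by apply: contraNneq qC_neq0 => s0; rewrite -sqC_sqr s0 mul0r. Qed.

End Deformation.

Section OSUq2.
Variables (R : realType) (q : R).
Hypotheses (q_gt0 : 0 < q) (q_lt1 : q < 1).
Variables (A : algType R[i]) (a b c d : A) (K Ki E F : {linear A -> A}).
Hypotheses (rel : SUq2_relations q a b c d) (free : pbw_free a b c d).
Hypotheses (span : pbw_span a b c d) (act : Uq_action q a b c d K Ki E F).

Local Notation qc := (qC q).
Local Notation sq := (sqC q).
Local Notation M := (pbw_mono a b c d).
Local Notation pbw_index := (int * nat * nat)%type.

Lemma OSUq2_ind (P : A -> Prop) : P 1 -> P a -> P b -> P c -> P d ->
  (forall x y, P x -> P y -> P (x * y)) -> (forall x y, P x -> P y -> P (x + y)) ->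
  (forall k x, P x -> P (k *: x)) -> forall x, P x.
Proof.
move=> P1 Pa Pb Pc Pd PM PD PZ x.
have PX y n : P y -> P (y ^+ n).
  by move=> Py; elim: n => [|n IH]; rewrite ?expr0 // exprS; apply: PM.
have [s [coef ->]] := span x; elim: s => [|i s IH].
  by rewrite big_nil -(scale0r 1); apply: PZ.
rewrite big_cons; apply: PD => //; apply: PZ.
by case: i => [[[k|k] m] n]; apply: PM (PM _ _ (PX _ _ _) (PX _ _ _)) (PX _ _ _).
Qed.

Lemma alg_endo_id (f : A -> A) :
  {morph f : x y / x + y} -> (forall k x, f (k *: x) = k *: f x) ->
  {morph f : x y / x * y} -> f 1 = 1 ->
  f a = a -> f b = b -> f c = c -> f d = d -> f =1 id.
Proof.
move=> fD fZ fM f1 fa fb fc fd; elim/OSUq2_ind => //.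
- by move=> x y /= fx fy; rewrite fM fx fy.
- by move=> x y /= fx fy; rewrite fD fx fy.
- by move=> k x /= fx; rewrite fZ fx.
Qed.

Lemma scale_sqC_inv (x : A) : sq *: (sq^-1 *: x) = x /\ sq^-1 *: (sq *: x) = x.
Proof. by rewrite !scalerA mulfV ?mulVf ?scale1r ?(sqC_neq0 q_gt0). Qed.

Lemma KiK : cancel Ki K.
Proof.
apply: alg_endo_id => [x y|k x|x y|||||] /=.
- by rewrite !linearD.
- by rewrite !linearZ.
- by rewrite (Ki_mul act) (K_mul act).
- by rewrite (Ki_one act) (K_one act).
- by rewrite (Ki_a act) linearZ /= (K_a act); case: (scale_sqC_inv a).
- by rewrite (Ki_b act) linearZ /= (K_b act); case: (scale_sqC_inv b).
- by rewrite (Ki_c act) linearZ /= (K_c act); case: (scale_sqC_inv c).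
- by rewrite (Ki_d act) linearZ /= (K_d act); case: (scale_sqC_inv d).
Qed.

Lemma KKi : cancel K Ki.
Proof.
apply: alg_endo_id => [x y|k x|x y|||||] /=.
- by rewrite !linearD.
- by rewrite !linearZ.
- by rewrite (K_mul act) (Ki_mul act).
- by rewrite (K_one act) (Ki_one act).
- by rewrite (K_a act) linearZ /= (Ki_a act); case: (scale_sqC_inv a).
- by rewrite (K_b act) linearZ /= (Ki_b act); case: (scale_sqC_inv b).
- by rewrite (K_c act) linearZ /= (Ki_c act); case: (scale_sqC_inv c).
- by rewrite (K_d act) linearZ /= (Ki_d act); case: (scale_sqC_inv d).
Qed.

Lemma twisted_der_Kcomm (G : {linear A -> A}) (u : R[i]) :
  (forall x y, G (x * y) = G x * Ki y + K x * G y) ->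
  K (G a) = u *: G (K a) -> K (G b) = u *: G (K b) ->
  K (G c) = u *: G (K c) -> K (G d) = u *: G (K d) ->
  forall x, K (G x) = u *: G (K x).
Proof.
move=> GM Ga Gb Gc Gd; elim/OSUq2_ind => //.
- have G1 : G 1 = 0.
    have := GM 1 1; rewrite mulr1 (Ki_one act) (K_one act) mulr1 mul1r.
    by move=> G11; apply: (addIr (G 1)); rewrite add0r -G11.
  by rewrite (K_one act) G1 linear0 scaler0.
- move=> x y Kx Ky; rewrite GM linearD /= !(K_mul act) Kx Ky KiK GM KKi.
  by rewrite scalerDr scalerAl scalerAr.
- by move=> x y Kx Ky; rewrite !linearD /= Kx Ky.
- by move=> k x Kx; rewrite !linearZ /= Kx !scalerA mulrC.
Qed.

Lemma K_E x : K (E x) = qc^-1 *: E (K x).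
Proof.
have qs : qc^-1 * sq = sq^-1.
  by rewrite -(sqC_sqr q_gt0) invfM -mulrA mulVf ?mulr1 ?(sqC_neq0 q_gt0).
apply: twisted_der_Kcomm; first exact: (E_mul act).
- by rewrite (E_a act) (K_b act) (K_a act) linearZ /= (E_a act) scalerA qs.
- by rewrite (E_b act) (K_b act) linearZ /= (E_b act) linear0 !scaler0.
- by rewrite (E_c act) (K_d act) (K_c act) linearZ /= (E_c act) scalerA qs.
- by rewrite (E_d act) (K_d act) linearZ /= (E_d act) linear0 !scaler0.
Qed.

Lemma K_F x : K (F x) = qc *: F (K x).
Proof.
have qs : qc * sq^-1 = sq by rewrite -(sqC_sqr q_gt0) mulfK ?(sqC_neq0 q_gt0).
apply: twisted_der_Kcomm; first exact: (F_mul act).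
- by rewrite (F_a act) (K_a act) linearZ /= (F_a act) linear0 !scaler0.
- by rewrite (F_b act) (K_a act) (K_b act) linearZ /= (F_b act) scalerA qs.
- by rewrite (F_c act) (K_c act) linearZ /= (F_c act) linear0 !scaler0.
- by rewrite (F_d act) (K_c act) (K_d act) linearZ /= (F_d act) scalerA qs.
Qed.

Lemma Omega1_K_eigen (lam mu : R[i]) (w : A * A) : Omega1 K E F lam mu w ->
  K w.1 = qc^-1 *: w.1 /\ K w.2 = qc *: w.2.
Proof.
case=> s [podles_s [-> ->]]; rewrite !linear_sum.
split; apply: eq_big_seq => p /podles_s[Kp1 Kp2].
- by rewrite (K_mul act) Kp1 linearZ /= K_E Kp2 scalerAr !scalerA mulrC.
- by rewrite (K_mul act) Kp1 linearZ /= K_F Kp2 scalerAr !scalerA mulrC.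
Qed.

Lemma podles_bc : podles K (b * c).
Proof.
rewrite /podles (K_mul act) (K_b act) (K_c act) -scalerAl -scalerAr scalerA.
by rewrite mulVf ?scale1r ?(sqC_neq0 q_gt0).
Qed.

Lemma podles_ab : podles K (a * b).
Proof.
rewrite /podles (K_mul act) (K_a act) (K_b act) -scalerAl -scalerAr scalerA.
by rewrite mulfV ?scale1r ?(sqC_neq0 q_gt0).
Qed.

Lemma mul_ba : b * a = qc^-1 *: (a * b).
Proof. by rewrite (rel_ab rel) scalerA mulVf ?scale1r ?(qC_neq0 q_gt0). Qed.

Lemma mul_ca : c * a = qc^-1 *: (a * c).
Proof. by rewrite (rel_ac rel) scalerA mulVf ?scale1r ?(qC_neq0 q_gt0). Qed.

Lemma mono_mul_bc (X : A) m n :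
  (X * b ^+ m * c ^+ n) * (b * c) = X * b ^+ m.+1 * c ^+ n.+1.
Proof.
rewrite mulrA -(mulrA _ (c ^+ n)) -(commrX n (rel_bc rel)) mulrA -(mulrA X).
by rewrite -exprSr -mulrA -exprSr.
Qed.

Lemma bc_mul_mono (X : A) (v : R[i]) m n :
  b * X = v *: (X * b) -> c * X = v *: (X * c) ->
  (b * c) * (X * b ^+ m * c ^+ n) = (v * v) *: (X * b ^+ m.+1 * c ^+ n.+1).
Proof.
move=> bX cX; have cbm := commrX m (esym (rel_bc rel)).
rewrite -!mulrA (mulrA c) cX -scalerAl -scalerAr !mulrA bX -!scalerAl scalerA.
by rewrite -(mulrA _ c) cbm mulrA -(mulrA X b) -exprS -(mulrA _ c) -exprS.
Qed.

Definition bc_shift (i : pbw_index) : pbw_index := (i.1.1, i.1.2.+1, i.2.+1).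
Definition bc_unshift (i : pbw_index) : pbw_index := (i.1.1, i.1.2.-1, i.2.-1).
Definition bc_weight (i : pbw_index) : R[i] :=
  match i.1.1 with Posz k => qc^-1 ^+ (k + k) | Negz j => qc ^+ (j.+1 + j.+1) end.

Definition ab_shift (i : pbw_index) : pbw_index := (i.1.1 + 1, i.1.2.+1, i.2).
Definition ab_unshift (i : pbw_index) : pbw_index := (i.1.1 - 1, i.1.2.-1, i.2).
Definition ab_weight (i : pbw_index) : R[i] := qc^-1 ^+ (i.1.2 + i.2).

Lemma bc_shiftK : cancel bc_shift bc_unshift.
Proof. by case=> [[k m] n]. Qed.

Lemma ab_shiftK : cancel ab_shift ab_unshift.
Proof. by case=> [[k m] n]; rewrite /ab_shift /ab_unshift /= addrK. Qed.

Lemma pbw_bc_mul i :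
  (b * c) * M i = bc_weight i *: M (bc_shift i) /\ M i * (b * c) = M (bc_shift i).
Proof.
split; last by case: i => [[[k|j] m] n]; apply: mono_mul_bc.
case: i => [[[k|j] m] n]; rewrite /bc_weight /= exprD; apply: bc_mul_mono.
- exact: qcomm_exprr mul_ba.
- exact: qcomm_exprr mul_ca.
- exact: qcomm_exprr (rel_bd rel).
- exact: qcomm_exprr (rel_cd rel).
Qed.

Lemma pbw_ab_mul i : i.1.1 = 0 ->
  (a * b) * M i = M (ab_shift i) /\ M i * (a * b) = ab_weight i *: M (ab_shift i).
Proof.
case: i => [[k m] n] /= ->; rewrite /ab_shift /ab_weight /= expr0 !mul1r expr1.
split; first by rewrite !mulrA -(mulrA a b) -exprS.
rewrite !mulrA -(mulrA _ (c ^+ n) a) (qcomm_exprl n mul_ca) -scalerAr -scalerAl.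
rewrite mulrA (qcomm_exprl m mul_ba) -!scalerAl scalerA -exprD addnC.
by rewrite -(mulrA _ (c ^+ n) b) -(commrX n (rel_bc rel)) exprSr !mulrA.
Qed.

Lemma bc_weight_neq1 i : i.1.1 != 0 -> bc_weight i != 1.
Proof.
case: i => [[[k|j] m] n]; rewrite /bc_weight /= => k_neq0.
  by rewrite gt_eqF // exprn_egt1 ?(qC_inv_gt1 q_gt0 q_lt1) // addn_eq0 andbb.
by rewrite lt_eqF // exprn_ilt1 ?ltW ?(qC_gt0 q_gt0) ?(qC_lt1 q_lt1).
Qed.

Lemma ab_weight_neq1 i : (i.1.2 + i.2 != 0)%N -> ab_weight i != 1.
Proof. by move=> mn_neq0; rewrite gt_eqF // exprn_egt1 ?(qC_inv_gt1 q_gt0 q_lt1). Qed.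

Lemma pbw_uniq_span x : exists s (coef : pbw_index -> R[i]),
  uniq s /\ x = \sum_(i <- s) coef i *: M i.
Proof.
have [s [coef ->]] := span x.
exists (undup s), (fun i => coef i *+ count_mem i s); split; first exact: undup_uniq.
by rewrite -sumr_undup_count; apply: eq_bigr => i _; rewrite scalerMnl.
Qed.

Lemma pbw_free_reindex (sh ush : pbw_index -> pbw_index) (s : seq pbw_index)
    (coef : pbw_index -> R[i]) :
  cancel sh ush -> uniq s -> \sum_(i <- s) coef i *: M (sh i) = 0 ->
  forall i, i \in s -> coef i = 0.
Proof.
move=> shK s_uniq sum0 i i_s.
have sh_uniq : uniq (map sh s) by rewrite (map_inj_uniq (can_inj shK)).
have sh_sum0 : \sum_(j <- map sh s) coef (ush j) *: M j = 0.
  by rewrite big_map; under eq_bigr => j _ do rewrite shK.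
by have := free sh_uniq sh_sum0 (map_f sh i_s); rewrite shK.
Qed.

Section Commutant.
Variables (s : seq pbw_index) (coef : pbw_index -> R[i]).
Hypothesis s_uniq : uniq s.
Local Notation x := (\sum_(i <- s) coef i *: M i).

Lemma commutant_bc_coef : GRing.comm (b * c) x ->
  forall i, i \in s -> i.1.1 != 0 -> coef i = 0.
Proof.
move=> bc_x i i_s k_neq0.
suff /eqP : coef i * (bc_weight i - 1) = 0.
  by rewrite mulf_eq0 subr_eq0 (negbTE (bc_weight_neq1 k_neq0)) orbF => /eqP.
apply: (pbw_free_reindex (coef := fun j => coef j * (bc_weight j - 1))
  bc_shiftK s_uniq _ i_s).
rewrite -[RHS](subrr (b * c * x)) {2}bc_x mulr_sumr mulr_suml -sumrB.
apply: eq_bigr => j _; have [bcM Mbc] := pbw_bc_mul j.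
by rewrite -scalerAr -scalerAl bcM Mbc scalerA mulrBr mulr1 scalerBl.
Qed.

Lemma commutant_ab_coef : GRing.comm (b * c) x -> GRing.comm (a * b) x ->
  forall i, i \in s -> i.1.1 = 0 -> (i.1.2 + i.2 != 0)%N -> coef i = 0.
Proof.
move=> bc_x ab_x i i_s k0 mn_neq0.
suff /eqP : coef i * (1 - ab_weight i) = 0.
  rewrite mulf_eq0 subr_eq0 [1 == _]eq_sym (negbTE (ab_weight_neq1 mn_neq0)).
  by rewrite orbF => /eqP.
apply: (pbw_free_reindex (coef := fun j => coef j * (1 - ab_weight j))
  ab_shiftK s_uniq _ i_s).
rewrite -[RHS](subrr (a * b * x)) {2}ab_x mulr_sumr mulr_suml -sumrB.
rewrite big_seq [RHS]big_seq; apply: eq_bigr => j j_s.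
rewrite -scalerAr -scalerAl; have [k0_j|k_neq0] := eqVneq j.1.1 0.
  have [abM Mab] := pbw_ab_mul k0_j.
  by rewrite abM Mab scalerA mulrBr mulr1 scalerBl.
by rewrite (commutant_bc_coef bc_x j_s k_neq0) mul0r !scale0r subrr.
Qed.

End Commutant.

Lemma commutant_bc_ab x : GRing.comm (b * c) x -> GRing.comm (a * b) x ->
  exists k, x = k%:A.
Proof.
have [s [coef [s_uniq ->]]] := pbw_uniq_span x; move=> bc_x ab_x.
pose i0 : pbw_index := (0, 0%N, 0%N).
have coef0 i : i \in s -> i != i0 -> coef i = 0.
  move=> i_s i_neq0; have [k0|k_neq0] := eqVneq i.1.1 0; last first.
    exact (commutant_bc_coef s_uniq bc_x i_s k_neq0).
  apply: (commutant_ab_coef s_uniq bc_x ab_x i_s k0); apply: contra i_neq0.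
  by case: i k0 {i_s} => [[k m] n] /= -> /[!addn_eq0] /andP[/eqP-> /eqP->].
exists (\sum_(i <- s) (if i == i0 then coef i else 0)).
rewrite scaler_suml big_seq [RHS]big_seq; apply: eq_bigr => i i_s.
have [-> | i_neq0] := eqVneq i i0; first by rewrite /= expr0 !mulr1.
by rewrite coef0 // !scale0r.
Qed.

Lemma commutant_K_eigen_eq0 x (u : R[i]) : u != 1 -> K x = u *: x ->
  GRing.comm (b * c) x -> GRing.comm (a * b) x -> x = 0.
Proof.
move=> u_neq1 Kx bc_x ab_x; have [k x_scalar] := commutant_bc_ab bc_x ab_x.
have : (1 - u) *: x = 0.
  by rewrite scalerBl scale1r -Kx x_scalar linearZ /= (K_one act) subrr.
by move/eqP; rewrite scaler_eq0 subr_eq0 eq_sym (negbTE u_neq1) => /eqP.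
Qed.

End OSUq2.

Theorem mainTheorem16 (R : realType) (q : R) (hq0 : 0 < q) (hq1 : q < 1)
  (A : algType R[i]) (a b c d : A) (K Ki E F : {linear A -> A})
  (lam mu : R[i]) (hlam : lam != 0) (hmu : mu != 0) :
  is_OSUq2 q a b c d ->
  Uq_action q a b c d K Ki E F ->
  forall w : A * A,
    Omega1 K E F lam mu w -> central_B K w -> w = (0, 0).
Proof.
move=> [rel free span] act w w_form w_central.
have [Kw1 Kw2] := Omega1_K_eigen hq0 span act w_form.
have [bc_w1 bc_w2] := w_central _ (podles_bc hq0 act).
have [ab_w1 ab_w2] := w_central _ (podles_ab hq0 act).
rewrite [w]surjective_pairing; congr (_, _).
- apply: (commutant_K_eigen_eq0 hq0 hq1 rel free span act _ Kw1 bc_w1 ab_w1).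
  by rewrite gt_eqF // qC_inv_gt1.
- apply: (commutant_K_eigen_eq0 hq0 hq1 rel free span act _ Kw2 bc_w2 ab_w2).
  by rewrite lt_eqF // qC_lt1.
Qed.
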